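(* Let $G$ be the two-player game with $A_1=\{C_1,D_1\}$, $A_2=\{C_2,D_2\}$ and $\pi(C_1,C_2)=(2,2)$, $\pi(C_1,D_2)=(0,3)$, $\pi(D_1,C_2)=(3,0)$, $\pi(D_1,D_2)=(1,1)$. Then for every $p\in(0,1)$, the profile $(D_1,D_2)$ (the unique, and strict, Nash equilibrium of $G$) is not stable for the degree of observability $p$; that is, no stable configuration for degree $p$ has aggregate outcome equal to the point mass at $(D_1,D_2)$.
   Context: Preference types: $\Theta=\mathbb{R}^A$, $A=A_1\times A_2$ (extended bilinearly; $\pi_i$ likewise). $\mathcal{M}(\Theta^2)$: product distributions $\mu=\mu_1\times\mu_2$ with finitely supported marginals; $\mu(\theta)=\mu_1(\theta_1)\mu_2(\theta_2)$, $\mu_{-i}=\mu_j$ ($j\ne i$). Mutants: for nonempty $J\subseteq N=\{1,2\}$, $\tilde\theta_J\in\prod_{j\in J}(\Theta\setminus\operatorname{supp}\mu_j)$ with shares $\varepsilon\in(0,1)^{|J|}$, $\|\varepsilon\|=\max_j\varepsilon_j$; post-entry $\tilde\mu^\varepsilon_i=(1-\varepsilon_i)\mu_i+\varepsilon_i\delta_{\tilde\theta_i}$ for $i\in J$, $\mu_i$ otherwise. Partial observability with degree $p\in(0,1)$: each player independently observes opponents' types with probability $p$ and otherwise knows only $\mu_{-i}$. Strategies: $b:\operatorname{supp}\mu\to\prod_i\Delta(A_i)$ (play when observing) and $s_i:\operatorname{supp}\mu_i\to\Delta(A_i)$ (play when not observing), $s(\theta)=(s_i(\theta_i))_i$. For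 a matched profile $\theta$ and the set $T\subseteq N$ of non-observing players, the profile played is $(s(\theta)_T,b(\theta)_{-T})$. $(b,s)$ is an equilibrium if for all $\theta\in\operatorname{supp}\mu$ and $i$: $b_i(\theta)\in\arg\max_{\sigma_i}\sum_{T\subseteq N\setminus\{i\}}p^{n-1-|T|}(1-p)^{|T|}\theta_i(\sigma_i,(s_{-i}(\theta_{-i})_T,b_{-i}(\theta)_{-T}))$ and $s_i(\theta_i)\in\arg\max_{\sigma_i}\sum_{\theta'_{-i}}\mu_{-i}(\theta'_{-i})\sum_{T\subseteq N\setminus\{i\}}p^{n-1-|T|}(1-p)^{|T|}\theta_i(\sigma_i,(s_{-i}(\theta'_{-i})_T,b_{-i}(\theta_i,\theta'_{-i})_{-T}))$ (here $n=2$); $B_p(\mu)$ is the set of these; $(\mu,b,s)$ is a configuration. Aggregate outcome: $\varphi_{\mu,b,s}(a)=\sum_{\theta}\mu(\theta)\sum_{T\subseteq N}p^{n-|T|}(1-p)^{|T|}\prod_i(s(\theta)_T,b(\theta)_{-T})_i(a_i)$. Average fitness: $\Pi_{\theta_i}(\mu;b,s)=\sum_{\theta'_{-i}}\mu_{-i}(\theta'_{-i})\sum_{T\subseteq N}p^{n-|T|}(1-p)^{|T|}\pi_i(s(\theta_i,\theta'_{-i})_T,b(\theta_i,\theta'_{-i})_{-T})$. Balanced: equal average fitness of all types within each population. Nearby set: $B_p^\eta(\tilde\mu^\varepsilon;b,s)=\{(\tilde b,\tilde s)\in B_p(\tilde\mu^\varepsilon):\max_i\|\tilde b_i(\theta)-b_i(\theta)\|\le\eta,\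 \max_i\|\tilde s_i(\theta_i)-s_i(\theta_i)\|\le\eta\ \forall\theta\in\operatorname{supp}\mu\}$. $(\mu,b,s)$ is stable (for degree $p$) if balanced and for every nonempty $J$, every $\tilde\theta_J$, every $\eta>0$, there are $\bar\eta\in[0,\eta)$, $\bar\epsilon\in(0,1)$ such that for all $\varepsilon$ with $\|\varepsilon\|\in(0,\bar\epsilon)$, $B_p^{\bar\eta}(\tilde\mu^\varepsilon;b,s)\ne\emptyset$ and each of its elements satisfies (i) some $j\in J$ has $\Pi_{\theta_j}>\Pi_{\tilde\theta_j}$ (post-entry) for all $\theta_j\in\operatorname{supp}\mu_j$, or (ii) for every $i$ all types in $\operatorname{supp}\tilde\mu^\varepsilon_i$ have equal post-entry average fitness. A pure profile $a^*$ is stable for degree $p$ if the point mass at $a^*$ is the aggregate outcome of a stable configuration for $p$. *)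

From Stdlib Require Import Reals List.
Import ListNotations.
Open Scope R_scope.

(** Actions: C (cooperate) and D (defect); both players have action set {C,D}
    (A_1 = {C_1,D_1}, A_2 = {C_2,D_2}). A profile is a pair (a1,a2). *)
Inductive act : Type := C | D.
Definition act_eqb (x y : act) : bool :=
  match x, y with C, C | D, D => true | _, _ => false end.

Definition Theta : Type := act -> act -> R.

Definition mix : Type := act -> R.
Definition is_mix (s : mix) : Prop := 0 <= s C /\ 0 <= s D /\ s C + s D = 1.

Definition ext (th : Theta) (s1 s2 : mix) : R :=
  s1 C * s2 C * th C C + s1 C * s2 D * th C D +
  s1 D * s2 C * th D C + s1 D * s2 D * th D D.

Definition pi1 : Theta := fun a1 a2 =>
  match a1, a2 with C, C => 2 | C, D => 0 | D, C => 3 | D, D => 1 end.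
Definition pi2 : Theta := fun a1 a2 =>
  match a1, a2 with C, C => 2 | C, D => 3 | D, C => 0 | D, D => 1 end.

(** Finitely supported distributions on Theta: lists of (type, weight) pairs,
    with distinct types, positive weights, total weight 1. *)
Definition dist : Type := list (Theta * R).
Definition supp (d : dist) : list Theta := map fst d.
Definition rsum {X : Type} (f : X -> R) (l : list X) : R :=
  fold_right (fun x acc => f x + acc) 0 l.
Definition valid_dist (d : dist) : Prop :=
  NoDup (supp d) /\ Forall (fun x => 0 < snd x) d /\ rsum snd d = 1.
Definition expect (d : dist) (f : Theta -> R) : R :=
  rsum (fun x => snd x * f (fst x)) d.

(** Strategies (b,s): b_i(theta1,theta2) when observing, s_i(theta_i) when not. *)
Record strat : Type := Strat {
  b1 : Theta -> Theta -> mix;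
  b2 : Theta -> Theta -> mix;
  s1 : Theta -> mix;
  s2 : Theta -> mix }.

(** Expected subjective payoff of player 1 (type th1, matched with th2, observing)
    when playing sg; opponent observes w.p. p (plays b2), else plays s2. *)
Definition obs1 (p : R) (st : strat) (th1 th2 : Theta) (sg : mix) : R :=
  p * ext th1 sg (b2 st th1 th2) + (1 - p) * ext th1 sg (s2 st th2).
Definition obs2 (p : R) (st : strat) (th1 th2 : Theta) (sg : mix) : R :=
  p * ext th2 (b1 st th1 th2) sg + (1 - p) * ext th2 (s1 st th1) sg.
Definition unobs1 (p : R) (st : strat) (m2 : dist) (th1 : Theta) (sg : mix) : R :=
  expect m2 (fun th2 => obs1 p st th1 th2 sg).
Definition unobs2 (p : R) (st : strat) (m1 : dist) (th2 : Theta) (sg : mix) : R :=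
  expect m1 (fun th1 => obs2 p st th1 th2 sg).

Definition is_best (f : mix -> R) (sg : mix) : Prop :=
  is_mix sg /\ forall sg', is_mix sg' -> f sg' <= f sg.

Definition equilibrium (p : R) (m1 m2 : dist) (st : strat) : Prop :=
  (forall th1 th2, In th1 (supp m1) -> In th2 (supp m2) ->
     is_best (obs1 p st th1 th2) (b1 st th1 th2) /\
     is_best (obs2 p st th1 th2) (b2 st th1 th2)) /\
  (forall th1, In th1 (supp m1) -> is_best (unobs1 p st m2 th1) (s1 st th1)) /\
  (forall th2, In th2 (supp m2) -> is_best (unobs2 p st m1 th2) (s2 st th2)).

(** Sum over the set T of non-observing players, weight p^(2-|T|) (1-p)^|T|,
    of f applied to the played mixed profile (s(theta)_T, b(theta)_{-T}). *)
Definition prof_avg (p : R) (st : strat) (th1 th2 : Theta) (f : mix -> mix -> R) : R :=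
  p * p * f (b1 st th1 th2) (b2 st th1 th2) +
  p * (1 - p) * f (s1 st th1) (b2 st th1 th2) +
  (1 - p) * p * f (b1 st th1 th2) (s2 st th2) +
  (1 - p) * (1 - p) * f (s1 st th1) (s2 st th2).

Definition aggregate (p : R) (m1 m2 : dist) (st : strat) (a1 a2 : act) : R :=
  expect m1 (fun th1 => expect m2 (fun th2 =>
    prof_avg p st th1 th2 (fun x y => x a1 * y a2))).

Definition fit1 (p : R) (m2 : dist) (st : strat) (th1 : Theta) : R :=
  expect m2 (fun th2 => prof_avg p st th1 th2 (ext pi1)).
Definition fit2 (p : R) (m1 : dist) (st : strat) (th2 : Theta) : R :=
  expect m1 (fun th1 => prof_avg p st th1 th2 (ext pi2)).

Definition balanced (p : R) (m1 m2 : dist) (st : strat) : Prop :=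
  (forall x y, In x (supp m1) -> In y (supp m1) -> fit1 p m2 st x = fit1 p m2 st y) /\
  (forall x y, In x (supp m2) -> In y (supp m2) -> fit2 p m1 st x = fit2 p m1 st y).

(** Post-entry population: None = no mutant in this population (i not in J);
    Some th = mutant type th with share e. *)
Definition post (m : dist) (t : option Theta) (e : R) : dist :=
  match t with
  | None => m
  | Some th => map (fun x => (fst x, (1 - e) * snd x)) m ++ [(th, e)]
  end.

Definition epsnorm (t1 t2 : option Theta) (e1 e2 : R) : R :=
  match t1, t2 with
  | Some _, Some _ => Rmax e1 e2
  | Some _, None => e1
  | None, Some _ => e2
  | None, None => 0
  end.

Definition mdist (x y : mix) : R := Rmax (Rabs (x C - y C)) (Rabs (x D - y D)).

(** (st') in B_p^eta(post-entry mu'; b, s); closeness checked on supp mu. *)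
Definition nearby (p : R) (m1 m2 m1' m2' : dist) (st st' : strat) (eta : R) : Prop :=
  equilibrium p m1' m2' st' /\
  forall th1 th2, In th1 (supp m1) -> In th2 (supp m2) ->
    mdist (b1 st' th1 th2) (b1 st th1 th2) <= eta /\
    mdist (b2 st' th1 th2) (b2 st th1 th2) <= eta /\
    mdist (s1 st' th1) (s1 st th1) <= eta /\
    mdist (s2 st' th2) (s2 st th2) <= eta.

Definition cond_i (p : R) (m1 m2 : dist) (t1 t2 : option Theta)
    (m1' m2' : dist) (st' : strat) : Prop :=
  (exists th, t1 = Some th /\
     forall x, In x (supp m1) -> fit1 p m2' st' x > fit1 p m2' st' th) \/
  (exists th, t2 = Some th /\
     forall y, In y (supp m2) -> fit2 p m1' st' y > fit2 p m1' st' th).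

Definition stable (p : R) (m1 m2 : dist) (st : strat) : Prop :=
  equilibrium p m1 m2 st /\ balanced p m1 m2 st /\
  forall t1 t2 : option Theta,
    (t1 <> None \/ t2 <> None) ->
    (forall th, t1 = Some th -> ~ In th (supp m1)) ->
    (forall th, t2 = Some th -> ~ In th (supp m2)) ->
    forall eta, 0 < eta ->
    exists etab epsb, 0 <= etab < eta /\ 0 < epsb < 1 /\
      forall e1 e2 : R,
        (t1 <> None -> 0 < e1 < 1) ->
        (t2 <> None -> 0 < e2 < 1) ->
        0 < epsnorm t1 t2 e1 e2 < epsb ->
        (exists st', nearby p m1 m2 (post m1 t1 e1) (post m2 t2 e2) st st' etab) /\
        (forall st', nearby p m1 m2 (post m1 t1 e1) (post m2 t2 e2) st st' etab ->
           cond_i p m1 m2 t1 t2 (post m1 t1 e1) (post m2 t2 e2) st' \/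
           balanced p (post m1 t1 e1) (post m2 t2 e2) st').

Definition pure_stable (p : R) (a1 a2 : act) : Prop :=
  exists (m1 m2 : dist) (st : strat),
    valid_dist m1 /\ valid_dist m2 /\ stable p m1 m2 st /\
    forall x y, aggregate p m1 m2 st x y = (if andb (act_eqb x a1) (act_eqb y a2) then 1 else 0).

From Stdlib Require Import Reals Lra List FunctionalExtensionality ClassicalEpsilon.
(* Imported after [Reals], so that [C] is the action and not the binomial coefficient. *)
Import ListNotations.
Open Scope R_scope.

(* If the aggregate outcome is the point mass at (D,D), every incumbent plays D
   in every contingency, so D is a best reply to D for every incumbent type.
   Let a mutant with constant (hence indifferent) preferences enter each
   population, and let mutants cooperate exactly when they observe each other.
   This is an equilibrium of the post-entry populations that leaves incumbent
   play unchanged, and a mutant pair earns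
   2p^2 + 3p(1-p) + 0(1-p)p + (1-p)^2 = 1 + p > 1,
   so mutants strictly outperform incumbents: neither (i) nor (ii) holds. *)

Lemma expect_app d1 d2 f : expect (d1 ++ d2) f = expect d1 f + expect d2 f.
Proof.
induction d1 as [|x d1 IH]; simpl; [ring|].
unfold expect in *; simpl in *; rewrite IH; ring.
Qed.

Lemma expect_ext d f g :
  (forall th, In th (supp d) -> f th = g th) -> expect d f = expect d g.
Proof.
induction d as [|x d IH]; intros H; [reflexivity|].
unfold expect in *; simpl in *.
rewrite H by auto; rewrite IH by auto; reflexivity.
Qed.

Lemma expect_le d f g : Forall (fun x => 0 <= snd x) d ->
  (forall th, In th (supp d) -> f th <= g th) -> expect d f <= expect d g.
Proof.
induction d as [|x d IH]; intros W H; [unfold expect; simpl; lra|].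
inversion W; subst; unfold expect in *; simpl in *.
assert (snd x * f (fst x) <= snd x * g (fst x)) by (apply Rmult_le_compat_l; auto).
assert (rsum (fun y => snd y * f (fst y)) d <= rsum (fun y => snd y * g (fst y)) d)
  by (apply IH; auto).
lra.
Qed.

Lemma expect_ge0 d f : Forall (fun x => 0 <= snd x) d ->
  (forall th, In th (supp d) -> 0 <= f th) -> 0 <= expect d f.
Proof.
intros W H.
replace 0 with (expect d (fun _ => 0)) at 1.
- now apply expect_le.
- clear W H; unfold expect; induction d; simpl; [reflexivity|]; rewrite IHd; ring.
Qed.

Lemma Forall_weights_ge0 (d : dist) :
  Forall (fun x => 0 < snd x) d -> Forall (fun x => 0 <= snd x) d.
Proof. apply Forall_impl; intros; lra. Qed.

Lemma expect_eq0 d f : Forall (fun x => 0 < snd x) d ->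
  (forall th, In th (supp d) -> 0 <= f th) -> expect d f = 0 ->
  forall th, In th (supp d) -> f th = 0.
Proof.
induction d as [|x d IH]; intros W H E th Hth; [destruct Hth|].
inversion W; subst; unfold expect in E; simpl in *.
assert (0 <= expect d f)
  by (apply expect_ge0; auto using Forall_weights_ge0).
assert (0 <= f (fst x)) by auto.
assert (0 <= snd x * f (fst x)) by (apply Rmult_le_pos; lra).
destruct Hth as [<-|Hth].
- apply (Rmult_eq_reg_l (snd x)); unfold expect in *; lra.
- apply IH; auto; unfold expect in *; lra.
Qed.

Lemma expect_post_some m t e f :
  expect (post m (Some t) e) f = (1 - e) * expect m f + e * f t.
Proof.
unfold post; rewrite expect_app.
replace (expect [(t, e)] f) with (e * f t) by (unfold expect; simpl; ring).
f_equal; unfold expect; induction m; simpl; [ring | rewrite IHm; ring].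
Qed.

Lemma supp_post_some m t e : supp (post m (Some t) e) = supp m ++ [t].
Proof. unfold supp, post; rewrite map_app, map_map; reflexivity. Qed.

Lemma post_weights_ge0 m t e : valid_dist m -> 0 < e < 1 ->
  Forall (fun x => 0 <= snd x) (post m (Some t) e).
Proof.
intros [_ [W _]] He; unfold post; apply Forall_app; split.
- apply Forall_map; eapply Forall_impl; [|exact W].
  simpl; intros x Hx; apply Rmult_le_pos; lra.
- constructor; simpl; [lra | constructor].
Qed.

Lemma valid_dist_supp_nonempty d : valid_dist d -> exists th, In th (supp d).
Proof.
intros [_ [_ S]]; destruct d as [|x d]; [unfold rsum in S; simpl in S; lra|].
exists (fst x); now left.
Qed.

Definition cst (c : R) : Theta := fun _ _ => c.

Lemma exists_fresh_constant_type (l : list Theta) : exists c, ~ In (cst c) l.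
Proof.
set (c := 1 + fold_right (fun th acc => Rabs (th C C) + acc) 0 l).
assert (Hc : forall th, In th l -> th C C < c).
{ unfold c; clear c; induction l as [|th l IH]; simpl; intros t Ht; [destruct Ht|].
  assert (0 <= fold_right (fun th acc => Rabs (th C C) + acc) 0 l).
  { clear IH Ht; induction l; simpl; [lra|]; pose proof (Rabs_pos (a C C)); lra. }
  pose proof (Rabs_pos (th C C)).
  destruct Ht as [<-|Ht]; [pose proof (Rle_abs (th C C)); lra|].
  specialize (IH t Ht); lra. }
exists c; intros H; specialize (Hc _ H); unfold cst in Hc; lra.
Qed.

Definition pure (a : act) : mix := fun x => if act_eqb a x then 1 else 0.

Lemma pure_mix a : is_mix (pure a).
Proof. unfold is_mix, pure; destruct a; simpl; lra. Qed.

Lemma mix_ge0 s a : is_mix s -> 0 <= s a.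
Proof. intros [? [? _]]; destruct a; assumption. Qed.

Lemma mix_eq_pure_D s : is_mix s -> s C = 0 -> s = pure D.
Proof.
intros [_ [_ S]] H; apply functional_extensionality; intros []; unfold pure; simpl; lra.
Qed.

Lemma ext_pure th a1 a2 : ext th (pure a1) (pure a2) = th a1 a2.
Proof. unfold ext, pure; destruct a1, a2; simpl; ring. Qed.

Lemma ext_cst c x y : is_mix x -> is_mix y -> ext (cst c) x y = c.
Proof.
intros [_ [_ Sx]] [_ [_ Sy]]; unfold ext, cst.
transitivity (c * (x C + x D) * (y C + y D)); [ring | rewrite Sx, Sy; ring].
Qed.

Lemma mdist_diag x : mdist x x = 0.
Proof. unfold mdist; rewrite !Rminus_diag, Rabs_R0; apply Rmax_left; lra. Qed.

Definition defects_on (m1 m2 : dist) (st : strat) : Prop :=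
  forall th1 th2, In th1 (supp m1) -> In th2 (supp m2) ->
    b1 st th1 th2 = pure D /\ b2 st th1 th2 = pure D /\
    s1 st th1 = pure D /\ s2 st th2 = pure D.

Lemma equilibrium_mix p m1 m2 st th1 th2 : equilibrium p m1 m2 st ->
  In th1 (supp m1) -> In th2 (supp m2) ->
  is_mix (b1 st th1 th2) /\ is_mix (b2 st th1 th2) /\
  is_mix (s1 st th1) /\ is_mix (s2 st th2).
Proof.
intros [E1 [E2 E3]] h1 h2.
destruct (E1 _ _ h1 h2) as [[? _] [? _]], (E2 _ h1) as [? _], (E3 _ h2) as [? _].
auto.
Qed.

Section MixedProfile.

Variables (p : R) (st : strat) (th1 th2 : Theta).
Hypotheses (Mb1 : is_mix (b1 st th1 th2)) (Mb2 : is_mix (b2 st th1 th2))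
  (Ms1 : is_mix (s1 st th1)) (Ms2 : is_mix (s2 st th2)).

Lemma prof_avg_prob_ge0 a1 a2 : 0 <= p <= 1 ->
  0 <= prof_avg p st th1 th2 (fun x y => x a1 * y a2).
Proof.
intros Hp; unfold prof_avg.
repeat apply Rplus_le_le_0_compat; repeat apply Rmult_le_pos;
  try lra; apply mix_ge0; assumption.
Qed.

Lemma prof_avg_prob_row a :
  prof_avg p st th1 th2 (fun x y => x a * y C) +
  prof_avg p st th1 th2 (fun x y => x a * y D) =
  p * b1 st th1 th2 a + (1 - p) * s1 st th1 a.
Proof.
destruct Mb2 as [_ [_ S2]], Ms2 as [_ [_ S4]]; unfold prof_avg.
transitivity (p * p * b1 st th1 th2 a * (b2 st th1 th2 C + b2 st th1 th2 D) +
  p * (1 - p) * s1 st th1 a * (b2 st th1 th2 C + b2 st th1 th2 D) +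
  (1 - p) * p * b1 st th1 th2 a * (s2 st th2 C + s2 st th2 D) +
  (1 - p) * (1 - p) * s1 st th1 a * (s2 st th2 C + s2 st th2 D)); [ring|].
rewrite S2, S4; ring.
Qed.

Lemma prof_avg_prob_col a :
  prof_avg p st th1 th2 (fun x y => x C * y a) +
  prof_avg p st th1 th2 (fun x y => x D * y a) =
  p * b2 st th1 th2 a + (1 - p) * s2 st th2 a.
Proof.
destruct Mb1 as [_ [_ S1]], Ms1 as [_ [_ S3]]; unfold prof_avg.
transitivity (p * p * b2 st th1 th2 a * (b1 st th1 th2 C + b1 st th1 th2 D) +
  (1 - p) * p * s2 st th2 a * (b1 st th1 th2 C + b1 st th1 th2 D) +
  p * (1 - p) * b2 st th1 th2 a * (s1 st th1 C + s1 st th1 D) +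
  (1 - p) * (1 - p) * s2 st th2 a * (s1 st th1 C + s1 st th1 D)); [ring|].
rewrite S1, S3; ring.
Qed.

End MixedProfile.

Lemma aggregate_eq0 p m1 m2 st a1 a2 : 0 <= p <= 1 ->
  valid_dist m1 -> valid_dist m2 -> equilibrium p m1 m2 st ->
  aggregate p m1 m2 st a1 a2 = 0 ->
  forall th1 th2, In th1 (supp m1) -> In th2 (supp m2) ->
    prof_avg p st th1 th2 (fun x y => x a1 * y a2) = 0.
Proof.
intros Hp [_ [W1 _]] [_ [W2 _]] Eq A th1 th2 h1 h2.
assert (N : forall t1 t2, In t1 (supp m1) -> In t2 (supp m2) ->
  0 <= prof_avg p st t1 t2 (fun x y => x a1 * y a2)).
{ intros t1 t2 g1 g2.
  destruct (equilibrium_mix _ _ _ _ _ _ Eq g1 g2) as [? [? [? ?]]].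
  now apply prof_avg_prob_ge0. }
revert th2 h2; apply (expect_eq0 m2); auto.
revert th1 h1; apply (expect_eq0 m1 (fun th1 => expect m2 (fun th2 =>
  prof_avg p st th1 th2 (fun x y => x a1 * y a2)))); auto.
intros th1 h1; apply expect_ge0; auto using Forall_weights_ge0.
Qed.

Lemma convex_comb_eq0 p x y : 0 < p < 1 -> 0 <= x -> 0 <= y ->
  p * x + (1 - p) * y = 0 -> x = 0 /\ y = 0.
Proof. intros; split; nra. Qed.

Lemma defects_of_aggregate_DD p m1 m2 st : 0 < p < 1 ->
  valid_dist m1 -> valid_dist m2 -> equilibrium p m1 m2 st ->
  (forall x y, aggregate p m1 m2 st x y =
     if andb (act_eqb x D) (act_eqb y D) then 1 else 0) ->
  defects_on m1 m2 st.
Proof.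
intros Hp V1 V2 Eq Ag th1 th2 h1 h2.
assert (Z : forall a1 a2, (a1, a2) <> (D, D) ->
  prof_avg p st th1 th2 (fun x y => x a1 * y a2) = 0).
{ intros a1 a2 Ha; apply (aggregate_eq0 p m1 m2 st); auto; [lra|].
  rewrite Ag; destruct a1, a2; simpl; congruence. }
destruct (equilibrium_mix _ _ _ _ _ _ Eq h1 h2) as [M1 [M2 [M3 M4]]].
assert (R := prof_avg_prob_row p st th1 th2 M2 M4 C).
assert (K := prof_avg_prob_col p st th1 th2 M1 M3 C).
rewrite !Z in R, K by congruence.
destruct (convex_comb_eq0 p (b1 st th1 th2 C) (s1 st th1 C)) as [u s];
  auto using mix_ge0; try lra.
destruct (convex_comb_eq0 p (b2 st th1 th2 C) (s2 st th2 C)) as [v t];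
  auto using mix_ge0; try lra.
repeat split; apply mix_eq_pure_D; assumption.
Qed.

Definition defect_best_reply1 (th : Theta) : Prop :=
  forall sg, is_mix sg -> ext th sg (pure D) <= ext th (pure D) (pure D).

Definition defect_best_reply2 (th : Theta) : Prop :=
  forall sg, is_mix sg -> ext th (pure D) sg <= ext th (pure D) (pure D).

Lemma defect_best_reply1_of_equilibrium p m1 m2 st th1 th2 :
  equilibrium p m1 m2 st -> defects_on m1 m2 st ->
  In th1 (supp m1) -> In th2 (supp m2) -> defect_best_reply1 th1.
Proof.
intros [E _] Def h1 h2 sg Msg.
destruct (Def _ _ h1 h2) as [B1 [B2 [_ S2]]].
destruct (E _ _ h1 h2) as [[_ Best] _]; specialize (Best sg Msg).
unfold obs1 in Best; rewrite B1, B2, S2 in Best; lra.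
Qed.

Lemma defect_best_reply2_of_equilibrium p m1 m2 st th1 th2 :
  equilibrium p m1 m2 st -> defects_on m1 m2 st ->
  In th1 (supp m1) -> In th2 (supp m2) -> defect_best_reply2 th2.
Proof.
intros [E _] Def h1 h2 sg Msg.
destruct (Def _ _ h1 h2) as [B1 [B2 [S1 _]]].
destruct (E _ _ h1 h2) as [_ [_ Best]]; specialize (Best sg Msg).
unfold obs2 in Best; rewrite B1, B2, S1 in Best; lra.
Qed.

Definition handshake_play (t1 t2 th1 th2 : Theta) : mix :=
  if excluded_middle_informative (th1 = t1 /\ th2 = t2) then pure C else pure D.

Definition handshake (t1 t2 : Theta) : strat :=
  Strat (handshake_play t1 t2) (handshake_play t1 t2) (fun _ => pure D) (fun _ => pure D).

Lemma handshake_play_mix t1 t2 th1 th2 : is_mix (handshake_play t1 t2 th1 th2).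
Proof. unfold handshake_play; destruct excluded_middle_informative; apply pure_mix. Qed.

Lemma handshake_play_other t1 t2 th1 th2 :
  ~ (th1 = t1 /\ th2 = t2) -> handshake_play t1 t2 th1 th2 = pure D.
Proof. unfold handshake_play; destruct excluded_middle_informative; tauto. Qed.

Lemma handshake_play_match t1 t2 : handshake_play t1 t2 t1 t2 = pure C.
Proof. unfold handshake_play; destruct excluded_middle_informative; tauto. Qed.

Lemma prof_avg_handshake_other p t1 t2 th1 th2 f : ~ (th1 = t1 /\ th2 = t2) ->
  prof_avg p (handshake t1 t2) th1 th2 f = f (pure D) (pure D).
Proof. intros H; unfold prof_avg; simpl; rewrite handshake_play_other by exact H; ring. Qed.

Lemma prof_avg_handshake_match1 p t1 t2 :
  prof_avg p (handshake t1 t2) t1 t2 (ext pi1) = 1 + p.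
Proof. unfold prof_avg; simpl; rewrite handshake_play_match, !ext_pure; simpl; ring. Qed.

Lemma prof_avg_handshake_match2 p t1 t2 :
  prof_avg p (handshake t1 t2) t1 t2 (ext pi2) = 1 + p.
Proof. unfold prof_avg; simpl; rewrite handshake_play_match, !ext_pure; simpl; ring. Qed.

Section Handshake.

Variables (p c1 c2 : R) (m1 m2 : dist).
Hypotheses (fresh1 : ~ In (cst c1) (supp m1)) (fresh2 : ~ In (cst c2) (supp m2)).
Hypotheses (best1 : forall th, In th (supp m1) -> defect_best_reply1 th)
  (best2 : forall th, In th (supp m2) -> defect_best_reply2 th).

Local Notation hs := (handshake (cst c1) (cst c2)).

Lemma incumbent_not_entrant1 th1 th2 :
  In th1 (supp m1) -> ~ (th1 = cst c1 /\ th2 = cst c2).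
Proof. intros h [-> _]; exact (fresh1 h). Qed.

Lemma incumbent_not_entrant2 th1 th2 :
  In th2 (supp m2) -> ~ (th1 = cst c1 /\ th2 = cst c2).
Proof. intros h [_ ->]; exact (fresh2 h). Qed.

Lemma handshake_obs1_incumbent th1 th2 sg :
  In th1 (supp m1) -> obs1 p hs th1 th2 sg = ext th1 sg (pure D).
Proof.
intros h; unfold obs1; simpl.
rewrite handshake_play_other by now apply incumbent_not_entrant1. ring.
Qed.

Lemma handshake_obs2_incumbent th1 th2 sg :
  In th2 (supp m2) -> obs2 p hs th1 th2 sg = ext th2 (pure D) sg.
Proof.
intros h; unfold obs2; simpl.
rewrite handshake_play_other by now apply incumbent_not_entrant2. ring.
Qed.

Lemma handshake_obs1_entrant th2 sg : is_mix sg -> obs1 p hs (cst c1) th2 sg = c1.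
Proof.
intros M; unfold obs1; simpl.
rewrite !ext_cst by auto using pure_mix, handshake_play_mix; ring.
Qed.

Lemma handshake_obs2_entrant th1 sg : is_mix sg -> obs2 p hs th1 (cst c2) sg = c2.
Proof.
intros M; unfold obs2; simpl.
rewrite !ext_cst by auto using pure_mix, handshake_play_mix; ring.
Qed.

Lemma handshake_obs1_le_defect th1 th2 sg : In th1 (supp m1 ++ [cst c1]) ->
  is_mix sg -> obs1 p hs th1 th2 sg <= obs1 p hs th1 th2 (pure D).
Proof.
intros h M; apply in_app_or in h as [h | [<- | []]].
- rewrite !handshake_obs1_incumbent by exact h; now apply best1.
- rewrite !handshake_obs1_entrant by auto using pure_mix; lra.
Qed.

Lemma handshake_obs2_le_defect th1 th2 sg : In th2 (supp m2 ++ [cst c2]) ->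
  is_mix sg -> obs2 p hs th1 th2 sg <= obs2 p hs th1 th2 (pure D).
Proof.
intros h M; apply in_app_or in h as [h | [<- | []]].
- rewrite !handshake_obs2_incumbent by exact h; now apply best2.
- rewrite !handshake_obs2_entrant by auto using pure_mix; lra.
Qed.

Lemma handshake_obs1_best th1 th2 : In th1 (supp m1 ++ [cst c1]) ->
  is_best (obs1 p hs th1 th2) (b1 hs th1 th2).
Proof.
intros h; split; [apply handshake_play_mix|]; intros sg M; simpl.
apply in_app_or in h as [h' | [<- | []]].
- rewrite handshake_play_other by now apply incumbent_not_entrant1.
  apply handshake_obs1_le_defect; auto using in_or_app.
- rewrite !handshake_obs1_entrant by auto using handshake_play_mix; lra.
Qed.

Lemma handshake_obs2_best th1 th2 : In th2 (supp m2 ++ [cst c2]) ->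
  is_best (obs2 p hs th1 th2) (b2 hs th1 th2).
Proof.
intros h; split; [apply handshake_play_mix|]; intros sg M; simpl.
apply in_app_or in h as [h' | [<- | []]].
- rewrite handshake_play_other by now apply incumbent_not_entrant2.
  apply handshake_obs2_le_defect; auto using in_or_app.
- rewrite !handshake_obs2_entrant by auto using handshake_play_mix; lra.
Qed.

Lemma handshake_equilibrium e1 e2 : valid_dist m1 -> valid_dist m2 ->
  0 < e1 < 1 -> 0 < e2 < 1 ->
  equilibrium p (post m1 (Some (cst c1)) e1) (post m2 (Some (cst c2)) e2) hs.
Proof.
intros V1 V2 He1 He2; unfold equilibrium; rewrite !supp_post_some; split; [|split].
- intros th1 th2 h1 h2; split; auto using handshake_obs1_best, handshake_obs2_best.
- intros th1 h1; split; [apply pure_mix|]; intros sg M; unfold unobs1.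
  apply expect_le; [now apply post_weights_ge0|].
  intros th2 _; now apply handshake_obs1_le_defect.
- intros th2 h2; split; [apply pure_mix|]; intros sg M; unfold unobs2.
  apply expect_le; [now apply post_weights_ge0|].
  intros th1 _; now apply handshake_obs2_le_defect.
Qed.

Lemma handshake_nearby st e1 e2 eta : valid_dist m1 -> valid_dist m2 ->
  0 < e1 < 1 -> 0 < e2 < 1 -> 0 <= eta -> defects_on m1 m2 st ->
  nearby p m1 m2 (post m1 (Some (cst c1)) e1) (post m2 (Some (cst c2)) e2) st hs eta.
Proof.
intros V1 V2 He1 He2 Heta Def; split; [now apply handshake_equilibrium|].
intros th1 th2 h1 h2; destruct (Def _ _ h1 h2) as [B1 [B2 [S1 S2]]]; simpl.
rewrite handshake_play_other by now apply incumbent_not_entrant1.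
rewrite B1, B2, S1, S2, mdist_diag; lra.
Qed.

(* Against incumbents an entrant fares exactly like an incumbent; against the
   other entrant it earns 1 + p instead of 1. *)
Lemma handshake_fit1_gain e2 i1 : In i1 (supp m1) ->
  fit1 p (post m2 (Some (cst c2)) e2) hs (cst c1) =
  fit1 p (post m2 (Some (cst c2)) e2) hs i1 + e2 * p.
Proof.
intros h; unfold fit1; rewrite !expect_post_some, prof_avg_handshake_match1.
rewrite (prof_avg_handshake_other p _ _ i1) by now apply incumbent_not_entrant1.
rewrite (expect_ext m2 (fun th2 => prof_avg p hs (cst c1) th2 (ext pi1))
  (fun th2 => prof_avg p hs i1 th2 (ext pi1))).
- rewrite ext_pure; simpl; ring.
- intros th2 h2; rewrite !prof_avg_handshake_other; auto using incumbent_not_entrant2.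
Qed.

Lemma handshake_fit2_gain e1 i2 : In i2 (supp m2) ->
  fit2 p (post m1 (Some (cst c1)) e1) hs (cst c2) =
  fit2 p (post m1 (Some (cst c1)) e1) hs i2 + e1 * p.
Proof.
intros h; unfold fit2; rewrite !expect_post_some, prof_avg_handshake_match2.
rewrite (prof_avg_handshake_other p _ _ _ i2) by now apply incumbent_not_entrant2.
rewrite (expect_ext m1 (fun th1 => prof_avg p hs th1 (cst c2) (ext pi2))
  (fun th1 => prof_avg p hs th1 i2 (ext pi2))).
- rewrite ext_pure; simpl; ring.
- intros th1 h1; rewrite !prof_avg_handshake_other; auto using incumbent_not_entrant1.
Qed.

Lemma handshake_entrants_fitter e1 e2 i1 i2 : 0 < p ->
  0 < e1 -> 0 < e2 -> In i1 (supp m1) -> In i2 (supp m2) ->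
  ~ (cond_i p m1 m2 (Some (cst c1)) (Some (cst c2))
       (post m1 (Some (cst c1)) e1) (post m2 (Some (cst c2)) e2) hs \/
     balanced p (post m1 (Some (cst c1)) e1) (post m2 (Some (cst c2)) e2) hs).
Proof.
intros Hp He1 He2 h1 h2.
pose proof (handshake_fit1_gain e2 i1 h1) as G1.
pose proof (handshake_fit2_gain e1 i2 h2) as G2.
assert (0 < e1 * p /\ 0 < e2 * p) as [Hg1 Hg2] by (split; apply Rmult_lt_0_compat; lra).
intros [[[th [E H]] | [th [E H]]] | [B _]].
- injection E as <-; specialize (H i1 h1); lra.
- injection E as <-; specialize (H i2 h2); lra.
- rewrite supp_post_some in B.
  specialize (B i1 (cst c1) ltac:(auto using in_or_app) ltac:(auto using in_or_app, in_eq)).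
  lra.
Qed.

End Handshake.

Theorem mainTheorem19 : forall p : R, 0 < p < 1 -> ~ pure_stable p D D.
Proof.
intros p Hp [m1 [m2 [st [V1 [V2 [[Eq [_ Stab]] Ag]]]]]].
pose proof (defects_of_aggregate_DD p m1 m2 st Hp V1 V2 Eq Ag) as Def.
destruct (valid_dist_supp_nonempty m1 V1) as [i1 h1].
destruct (valid_dist_supp_nonempty m2 V2) as [i2 h2].
assert (Best1 : forall th, In th (supp m1) -> defect_best_reply1 th)
  by eauto using defect_best_reply1_of_equilibrium.
assert (Best2 : forall th, In th (supp m2) -> defect_best_reply2 th)
  by eauto using defect_best_reply2_of_equilibrium.
destruct (exists_fresh_constant_type (supp m1)) as [c1 F1].
destruct (exists_fresh_constant_type (supp m2)) as [c2 F2].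
destruct (Stab (Some (cst c1)) (Some (cst c2))) with (eta := 1)
  as [etab [epsb [Hetab [Hepsb Hall]]]].
{ left; discriminate. }
{ intros th E; injection E as <-; exact F1. }
{ intros th E; injection E as <-; exact F2. }
{ lra. }
set (e := epsb / 2).
assert (He : 0 < e < 1) by (unfold e; lra).
destruct (Hall e e (fun _ => He) (fun _ => He)) as [_ Inv].
{ simpl; rewrite Rmax_left; unfold e; lra. }
apply (handshake_entrants_fitter p c1 c2 m1 m2 F1 F2 e e i1 i2); try lra; auto.
apply Inv, handshake_nearby; auto; lra.
Qed.
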